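(* Let $\chi\ge3$, let $s_1\ge s_2\ge\dots\ge s_\chi\ge0$, $\mathsf S=\mathrm{diag}(s_1,\dots,s_\chi)$, let $\mathcal N_L,\mathcal N_R$ be real numbers, $\mathbf p_R\in\mathbb C^{1\times\chi}$ a row vector and $\mathbf p_L\in\mathbb C^{\chi\times1}$ a column vector, and consider the $(\chi+2)\times(\chi+2)$ matrix $$M=\begin{pmatrix}\mathcal N_R&\mathbf p_R&0\\0&\mathsf S&\mathbf p_L\\0&0&\mathcal N_L\end{pmatrix}.$$ Denote the singular values of $M$ by $\lambda_{-1}\ge\lambda_0\ge\lambda_1\ge\dots\ge\lambda_\chi\ge0$. Then $s_a\ge\lambda_a\ge s_{a+2}$ for every $a\in\{1,\dots,\chi-2\}$. *)

From HB Require Import structures.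
From mathcomp Require Import all_boot all_order all_algebra.
From mathcomp Require Import complex.
Set Implicit Arguments. Unset Strict Implicit. Unset Printing Implicit Defensive.
Import Order.TTheory GRing.Theory Num.Theory.
Local Open Scope ring_scope.

Definition adjmx (R : rcfType) (m n : nat) (A : 'M[R[i]]_(m, n)) : 'M[R[i]]_(n, m) :=
  map_mx (@conjc R) A^T.

(* The eigenvalues of a square complex matrix, listed with (algebraic)
   multiplicity: the roots of its (monic) characteristic polynomial. *)
Definition eigenvalues_seq (R : rcfType) (n : nat) (A : 'M[R[i]]_n) : seq R[i] :=
  sval (closed_field_poly_normal (char_poly A)).

(* Singular values of M : the square roots of the eigenvalues of M^* M
   (which are real and nonnegative), with multiplicity, sorted in
   nonincreasing order. *)
Definition singular_values (R : rcfType) (m n : nat) (M : 'M[R[i]]_(m, n)) : seq R :=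
  sort (fun x y : R => y <= x)
    [seq Num.sqrt (complex.Re z) | z <- eigenvalues_seq (adjmx M *m M)].

(* The (chi+2) x (chi+2) matrix
      ( N_R  p_R  0  )
      ( 0    S    p_L)
      ( 0    0    N_L)
   with S = diag(s_1, ..., s_chi). *)
Definition transfer_mx (R : rcfType) (chi : nat) (NR NL : R) (s : 'I_chi -> R)
    (pR : 'rV[R[i]]_chi) (pL : 'cV[R[i]]_chi) : 'M[R[i]]_(1 + chi + 1) :=
  block_mx
    (block_mx (NR%:C)%C%:M pR 0 (diag_mx (\row_i (s i)%:C%C)))
    (col_mx 0 pL)
    0
    (NL%:C)%C%:M.

(* Let d_j be the eigenvalues of the Hermitian matrix A = M^* M, so that the
   singular values are the sqrt d_j.  Writing A = P^-1 diag(d) P with P unitary,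
   the quadratic form |x M^*|^2 becomes sum_j d_j |y_j|^2 with y = x P^-1.
   Hence, if |x M^*|^2 >= t^2 |x|^2 on the kernel of a matrix with p columns,
   at least n - p of the d_j are >= t^2: otherwise some nonzero x in that
   kernel would have y vanishing on all the coordinates where d_j >= t^2, and
   the form would be negative.  The same holds with the inequalities reversed.

   For M the transfer matrix and x a row vector with last coordinate 0, the
   middle block of x M^* is x_mid S and its first coordinate is
   x_0 N_R + x_mid p_R^*.  The lower bound lambda_a >= s_(a+2) uses the
   (a+2)-dimensional space of vectors supported on the middle coordinates
   1, ..., a + 2; the upper bound lambda_a <= s_a uses the a + 1 linear
   constraints x_last = 0, x_q = 0 for the a - 1 middle coordinates q < a,
   and the vanishing of the first coordinate of x M^*, which removes the
   contribution of N_R and p_R. *)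

From HB Require Import structures.
From mathcomp Require Import all_boot all_order all_algebra.
From mathcomp Require Import complex.
From mathcomp Require Import zify.
Set Implicit Arguments. Unset Strict Implicit. Unset Printing Implicit Defensive.
Import Order.TTheory GRing.Theory Num.Theory.
Local Open Scope ring_scope.
Local Open Scope sesquilinear_scope.

Definition sqnorm (F : numDomainType) n (u : 'rV[F]_n) : F := \sum_j `|u 0 j| ^+ 2.

Lemma sqnorm_ge0 (F : numDomainType) n (u : 'rV[F]_n) : 0 <= sqnorm u.
Proof. by apply: sumr_ge0 => j _; rewrite exprn_ge0. Qed.

Lemma sqnorm0 (F : numDomainType) n : sqnorm (0 : 'rV[F]_n) = 0.
Proof. by rewrite /sqnorm big1 // => j _; rewrite mxE normr0 expr0n. Qed.

Lemma sqnorm_row_mx (F : numDomainType) n1 n2 (u : 'rV[F]_n1) (v : 'rV[F]_n2) :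
  sqnorm (row_mx u v) = sqnorm u + sqnorm v.
Proof.
rewrite /sqnorm big_split_ord; congr (_ + _).
  by apply: eq_bigr => j _; rewrite row_mxEl.
by apply: eq_bigr => j _; rewrite row_mxEr.
Qed.

Lemma weighted_sqnorm_ge (F : numDomainType) n (w : 'I_n -> F) (y : 'rV[F]_n) c :
  (forall j, y 0 j != 0 -> c <= w j) -> c * sqnorm y <= \sum_j w j * `|y 0 j| ^+ 2.
Proof.
move=> hw; rewrite /sqnorm mulr_sumr; apply: ler_sum => j _.
have [->|/hw le_cw] := eqVneq (y 0 j) 0; first by rewrite normr0 expr0n !mulr0.
by rewrite ler_wpM2r ?exprn_ge0.
Qed.

Lemma weighted_sqnorm_le (F : numDomainType) n (w : 'I_n -> F) (y : 'rV[F]_n) c :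
  (forall j, y 0 j != 0 -> w j <= c) -> \sum_j w j * `|y 0 j| ^+ 2 <= c * sqnorm y.
Proof.
move=> hw; rewrite /sqnorm mulr_sumr; apply: ler_sum => j _.
have [->|/hw le_wc] := eqVneq (y 0 j) 0; first by rewrite normr0 expr0n !mulr0.
by rewrite ler_wpM2r ?exprn_ge0.
Qed.

Lemma card_ord_ltn n m : (m <= n)%N -> #|[set q : 'I_n | (q < m)%N]| = m.
Proof.
move=> lemn; rewrite -sum1_card (eq_bigl (fun q : 'I_n => (q < m)%N)) => [|q].
  by rewrite (big_ord_narrow lemn) sum1_card card_ord.
by rewrite inE.
Qed.

Lemma card_ord_geq n m : (m <= n)%N -> #|[set q : 'I_n | (m <= q)%N]| = (n - m)%N.
Proof.
move=> lemn; have := cardsC [set q : 'I_n | (q < m)%N].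
have -> : ~: [set q : 'I_n | (q < m)%N] = [set q : 'I_n | (m <= q)%N].
  by apply/setP => q; rewrite !inE -leqNgt.
by rewrite card_ord_ltn // card_ord; lia.
Qed.

Definition coord_mx {F : nzRingType} n (T : {set 'I_n}) : 'M[F]_(n, #|T|) :=
  colsub enum_val 1%:M.

Lemma coord_mx_eq0 (F : nzRingType) n (T : {set 'I_n}) (u : 'rV[F]_n) :
  u *m coord_mx T = 0 -> {in T, forall j, u 0 j = 0}.
Proof.
move=> /rowP uT0 j jT; have := uT0 (enum_rank_in jT j).
by rewrite mulmx_colsub mulmx1 !mxE enum_rankK_in.
Qed.

Lemma exists_kernel_nz (F : fieldType) n p (G : 'M[F]_(n, p)) :
  (p < n)%N -> exists2 u : 'rV_n, u != 0 & u *m G = 0.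
Proof.
move=> ltpn; have : kermx G != 0.
  by rewrite kermx_eq0 /row_free neq_ltn (leq_ltn_trans (rank_leq_col G)).
rewrite -nz_row_eq0 => nzu; exists (nz_row (kermx G)) => //.
exact/sub_kermxP/(submx_trans (nz_row_sub _)).
Qed.

Lemma card_nonneg_weights (F : numFieldType) n p (w : 'I_n -> F) (G : 'M[F]_(n, p)) :
  (forall j, w j \is Num.real) ->
  (forall u : 'rV_n, u *m G = 0 -> 0 <= \sum_j w j * `|u 0 j| ^+ 2) ->
  (n <= p + #|[set j | (0 <= w j)%R]|)%N.
Proof.
move=> wR hG; rewrite leqNgt; apply/negP => ltn.
set S := [set j | 0 <= w j] in ltn.
have [u nz_u] := exists_kernel_nz (row_mx G (coord_mx S)) ltn.
rewrite mul_mx_row -row_mx0 => /eq_row_mx[uG0 /coord_mx_eq0 uS0].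
have le0 j : w j * `|u 0 j| ^+ 2 <= 0.
  have [jS | jNS] := boolP (j \in S); first by rewrite uS0 // normr0 expr0n mulr0.
  rewrite inE real_leNgt ?real0 ?wR // negbK in jNS.
  by rewrite nmulr_rle0 // exprn_ge0.
have sum0 : \sum_j - (w j * `|u 0 j| ^+ 2) = 0.
  rewrite sumrN; apply/eqP; rewrite oppr_eq0 eq_le hG // andbT.
  by apply: sumr_le0 => j _; exact: le0.
have term0 j : w j * `|u 0 j| ^+ 2 = 0.
  by apply/eqP; rewrite -oppr_eq0 (psumr_eq0P _ sum0) // => l _; rewrite oppr_ge0.
case/negP: nz_u; apply/eqP/rowP => j; rewrite mxE.
have [jS | jNS] := boolP (j \in S); first exact: uS0.
move: (term0 j) => /eqP; rewrite mulf_eq0 sqrf_eq0 normr_eq0 => /orP[/eqP wj0|/eqP //].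
by rewrite inE wj0 lexx in jNS.
Qed.

Section Diagonalized.
Variable C : numClosedFieldType.

Lemma sqnormE n (u : 'rV[C]_n) : sqnorm u = (u *m u ^t*) 0 0.
Proof. by rewrite mxE; apply: eq_bigr => j _; rewrite !mxE normCK. Qed.

Lemma sqnorm_mul_unitary n (u : 'rV[C]_n) (U : 'M_n) :
  U \is unitarymx -> sqnorm (u *m U) = sqnorm u.
Proof. by move=> Uu; rewrite !sqnormE trmx_mul map_mxM mulmxA mulmxtVK. Qed.

Variables (m n : nat) (M : 'M[C]_(m, n)) (P : 'M[C]_n) (d : 'rV[C]_n).
Hypothesis P_unitary : P \is unitarymx.
Hypothesis adj_mul_diag : M ^t* *m M = invmx P *m diag_mx d *m P.

Lemma sqnorm_mul_adj (a : 'rV_n) :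
  sqnorm (a *m P *m M ^t*) = \sum_j d 0 j * `|a 0 j| ^+ 2.
Proof.
rewrite sqnormE !trmx_mul !map_mxM trmxCK !mulmxA -(mulmxA _ _ M) adj_mul_diag.
rewrite invmx_unitary // !mulmxA ![_ *m P *m _]mulmxtVK // mul_mx_diag mxE.
by apply: eq_bigr => j _; rewrite !mxE normCK mulrAC mulrC.
Qed.

Lemma diag_ge0 j : 0 <= d 0 j.
Proof.
have := sqnorm_mul_adj (delta_mx 0 j); rewrite (bigD1 j) //= big1 => [|l ljN].
  by rewrite mxE !eqxx normr1 expr1n mulr1 addr0 => <-; exact: sqnorm_ge0.
by rewrite mxE (negbTE ljN) andbF normr0 expr0n mulr0.
Qed.

Lemma diag_real j : d 0 j \is Num.real.
Proof. exact/ger0_real/diag_ge0. Qed.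

Section Kernel.
Variables (p : nat) (G : 'M[C]_(n, p)) (c : C).
Hypothesis c_real : c \is Num.real.

Lemma card_diag_ge :
  (forall u, u *m G = 0 -> c * sqnorm u <= sqnorm (u *m M ^t*)) ->
  (n <= p + #|[set j | (c <= d 0 j)%R]|)%N.
Proof.
move=> hG; have := @card_nonneg_weights _ _ _ (fun j => d 0 j - c) (P *m G).
have -> : [set j | (0 <= d 0 j - c)%R] = [set j | (c <= d 0 j)%R].
  by apply/setP => j; rewrite !inE subr_ge0.
apply=> [j | a aPG0]; first by rewrite rpredB ?diag_real.
have := hG (a *m P); rewrite -mulmxA aPG0 sqnorm_mul_unitary // sqnorm_mul_adj.
move=> /(_ erefl) hc; under eq_bigr do rewrite mulrBl.
by rewrite sumrB subr_ge0 -mulr_sumr.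
Qed.

Lemma card_diag_le :
  (forall u, u *m G = 0 -> sqnorm (u *m M ^t*) <= c * sqnorm u) ->
  (n <= p + #|[set j | (d 0 j <= c)%R]|)%N.
Proof.
move=> hG; have := @card_nonneg_weights _ _ _ (fun j => c - d 0 j) (P *m G).
have -> : [set j | (0 <= c - d 0 j)%R] = [set j | (d 0 j <= c)%R].
  by apply/setP => j; rewrite !inE subr_ge0.
apply=> [j | a aPG0]; first by rewrite rpredB ?diag_real.
have := hG (a *m P); rewrite -mulmxA aPG0 sqnorm_mul_unitary // sqnorm_mul_adj.
move=> /(_ erefl) hc; under eq_bigr do rewrite mulrBl.
by rewrite sumrB subr_ge0 -mulr_sumr.
Qed.

End Kernel.
End Diagonalized.

Lemma count_enum_card (T : finType) (Q : pred T) : count Q (enum T) = #|[set x | Q x]|.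
Proof.
rewrite -sum1_count big_enum_cond /= -sum1_card.
by apply: eq_bigl => x; rewrite inE.
Qed.

Lemma char_poly_similar (R : comUnitRingType) n (P A : 'M[R]_n) :
  P \in unitmx -> char_poly (invmx P *m A *m P) = char_poly A.
Proof.
move=> Pu; rewrite /char_poly; have -> : char_poly_mx (invmx P *m A *m P) =
    map_mx polyC (invmx P) *m char_poly_mx A *m map_mx polyC P.
  rewrite /char_poly_mx mulmxBr mulmxBl -!map_mxM mul_mx_scalar -scalemxAl.
  by rewrite -map_mxM mulVmx // map_mx1 scalemx1.
rewrite !det_mulmx mulrAC -det_mulmx -map_mxM mulVmx //.
by rewrite map_mx1 det1 mul1r.
Qed.

Lemma perm_eigenvalues_diag (R : rcfType) n (P : 'M[R[i]]_n) (d : 'rV_n) :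
  P \in unitmx ->
  perm_eq (eigenvalues_seq (invmx P *m diag_mx d *m P)) [seq d 0 j | j <- enum 'I_n].
Proof.
move=> Pu; rewrite /eigenvalues_seq; case: closed_field_poly_normal => r /=.
rewrite (monicP (char_poly_monic _)) scale1r char_poly_similar //.
rewrite char_poly_trig ?diag_mx_is_trig // => charE.
apply: prod_XsubC_eq; rewrite -charE big_map big_enum /=.
by apply: eq_bigr => j _; rewrite mxE eqxx.
Qed.

Section SingularValues.
Variables (R : rcfType) (m n : nat) (M : 'M[R[i]]_(m, n)).
Local Notation P := (spectralmx (M ^t* *m M)).
Local Notation d := (spectral_diag (M ^t* *m M)).

Lemma adj_mul_spectral : M ^t* *m M = invmx P *m diag_mx d *m P.
Proof. by apply/orthomx_spectralP/normalmxP; rewrite trmx_mul map_mxM trmxCK. Qed.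

Let P_unitary := spectral_unitarymx (M ^t* *m M).

Lemma perm_singular_values :
  perm_eq (singular_values M) [seq Num.sqrt (complex.Re (d 0 j)) | j <- enum 'I_n].
Proof.
rewrite perm_sort [in X in perm_eq _ X](map_comp (fun z => Num.sqrt (complex.Re z))).
apply: perm_map; rewrite -[adjmx M *m M]/(M ^t* *m M) {1}adj_mul_spectral.
exact/perm_eigenvalues_diag/unitarymx_unit.
Qed.

Lemma singular_values_sorted : sorted (fun x y => y <= x) (singular_values M).
Proof. by apply: sort_sorted => x y; apply: le_total. Qed.

Lemma size_singular_values : size (singular_values M) = n.
Proof. by rewrite (perm_size perm_singular_values) size_map size_enum_ord. Qed.

Lemma count_singular_values (Q : pred R) :
  count Q (singular_values M) = #|[set j | Q (Num.sqrt (complex.Re (d 0 j)))]|.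
Proof. by rewrite (permP perm_singular_values) count_map count_enum_card. Qed.

Lemma spectral_diag_ReE j : d 0 j = (complex.Re (d 0 j))%:C%C.
Proof. by rewrite RRe_real ?(diag_real P_unitary adj_mul_spectral). Qed.

Lemma spectral_diag_Re_ge0 j : 0 <= complex.Re (d 0 j).
Proof. by rewrite -ler0c -spectral_diag_ReE (diag_ge0 P_unitary adj_mul_spectral). Qed.

Section Kernel.
Variables (p : nat) (G : 'M[R[i]]_(n, p)) (t : R).
Hypothesis t_ge0 : 0 <= t.

Let sqr_real : (t ^+ 2)%:C%C \is Num.real.
Proof. by apply/complex_realP; exists (t ^+ 2). Qed.

Lemma singular_value_ge j : (p + j < n)%N ->
  (forall u, u *m G = 0 -> (t ^+ 2)%:C%C * sqnorm u <= sqnorm (u *m adjmx M)) ->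
  t <= nth 0 (singular_values M) j.
Proof.
move=> ltjn hG; have := card_diag_ge P_unitary adj_mul_spectral sqr_real hG.
have -> : [set l | ((t ^+ 2)%:C%C <= d 0 l)%R] =
          [set l | (t <= Num.sqrt (complex.Re (d 0 l)))%R].
  apply/setP => l; rewrite !inE {1}spectral_diag_ReE lecR.
  by rewrite -{2}(ger0_norm t_ge0) -sqrtr_sqr ler_sqrt // spectral_diag_Re_ge0.
rewrite -(count_singular_values (fun v => t <= v)); set c := count _ _ => cardS.
have ltjc : (j < c)%N by lia.
apply: (@nth_count_le _ R^d); [exact: singular_values_sorted | exact: ltjc].
Qed.

Lemma singular_value_le j : (p <= j < n)%N ->
  (forall u, u *m G = 0 -> sqnorm (u *m adjmx M) <= (t ^+ 2)%:C%C * sqnorm u) ->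
  nth 0 (singular_values M) j <= t.
Proof.
move=> /andP[lepj ltjn] hG; apply: (@nth_count_ge _ R^d).
  exact: singular_values_sorted.
rewrite size_singular_values ltjn andbT.
have := card_diag_le P_unitary adj_mul_spectral sqr_real hG.
have -> : [set l | (d 0 l <= (t ^+ 2)%:C%C)%R] =
          [set l | (Num.sqrt (complex.Re (d 0 l)) <= t)%R].
  apply/setP => l; rewrite !inE {1}spectral_diag_ReE lecR.
  by rewrite -{2}(ger0_norm t_ge0) -sqrtr_sqr ler_sqrt // exprn_ge0.
rewrite -(count_singular_values (fun v => v <= t)) count_le_gt size_singular_values.
have := count_size (> t) (singular_values M); rewrite size_singular_values.
set c := count (> t) _; change (c <= n -> n <= p + (n - c) -> c <= j)%N; lia.
Qed.

End Kernel.
End SingularValues.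

Lemma mul_row3_block3 (F : nzRingType) n1 n2 n3 p1 p2 (a : 'rV[F]_n1) (y : 'rV[F]_n2)
    (b : 'rV[F]_n3) (u : 'M_(n1, p1)) (v : 'M_(n2, p1)) (B : 'M_(n2, p2)) :
  row_mx (row_mx a y) b *m block_mx (block_mx u 0 v B) 0 0 1%:M =
  row_mx (row_mx (a *m u + y *m v) (y *m B)) b.
Proof. by rewrite !mul_row_block !mulmx0 !addr0 !add0r mulmx1. Qed.

Section Transfer.
Variables (R : rcfType) (chi : nat) (NR NL : R) (s : 'I_chi -> R).
Variables (pR : 'rV[R[i]]_chi) (pL : 'cV[R[i]]_chi).
Local Notation M := (transfer_mx NR NL s pR pL).
Local Notation S := (diag_mx (\row_q (s q)%:C%C)).

Lemma adj_transfer_mx :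
  adjmx M = block_mx (block_mx (NR%:C%C)%:M 0 (pR ^t*) S) 0 (row_mx 0 (pL ^t*)) (NL%:C%C)%:M.
Proof.
rewrite /adjmx /transfer_mx !tr_block_mx tr_col_mx !trmx0 !tr_scalar_mx tr_diag_mx.
rewrite !map_block_mx map_row_mx !map_mx0 !map_scalar_mx map_diag_mx.
congr (block_mx (block_mx _%:M 0 _ (diag_mx _)) 0 _ _%:M); try exact: conjc_real.
by apply/rowP => q; rewrite !mxE; exact: conjc_real.
Qed.

Lemma mul_adj_transfer_mx (a : 'rV_1) (y : 'rV_chi) :
  row_mx (row_mx a y) 0 *m adjmx M =
  row_mx (row_mx (a *m (NR%:C%C)%:M + y *m pR ^t*) (y *m S)) 0.
Proof. by rewrite adj_transfer_mx !mul_row_block !mulmx0 !mul0mx !addr0 !add0r. Qed.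

Lemma sqnorm_mul_diag (y : 'rV_chi) :
  sqnorm (y *m S) = \sum_q (s q ^+ 2)%:C%C * `|y 0 q| ^+ 2.
Proof.
rewrite /sqnorm mul_mx_diag; apply: eq_bigr => q _.
have sR : (s q)%:C%C \is Num.real by apply/complex_realP; exists (s q).
by rewrite !mxE normrM exprMn (real_normK sR) rmorphXn mulrC.
Qed.

Hypothesis s_anti : forall q q' : 'I_chi, (q <= q')%N -> s q' <= s q.
Hypothesis s_ge0 : forall q : 'I_chi, 0 <= s q.

Let sqr_anti (q q' : 'I_chi) : (q <= q')%N -> (s q' ^+ 2)%:C%C <= (s q ^+ 2)%:C%C.
Proof. by move=> le_qq'; rewrite lecR lerXn2r ?nnegrE ?s_anti. Qed.

Lemma transfer_singular_value_ge (k : 'I_chi) : s k <= nth 0 (singular_values M) k.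
Proof.
pose T := [set q : 'I_chi | (k < q)%N]; have ltkchi := ltn_ord k.
apply: (singular_value_ge (p := 1 + #|T| + 1)
  (G := block_mx (block_mx 1%:M 0 0 (coord_mx T)) 0 0 1%:M) (s_ge0 k)).
  by rewrite card_ord_geq //; lia.
move=> x; rewrite -[x]hsubmxK -[lsubmx x]hsubmxK mul_row3_block3 => /eqP.
rewrite !row_mx_eq0 mulmx1 mulmx0 addr0.
case/andP=> /andP[/eqP-> /eqP/coord_mx_eq0 yT] /eqP->.
rewrite mul_adj_transfer_mx !sqnorm_row_mx sqnorm_mul_diag mul0mx add0r !sqnorm0.
rewrite add0r !addr0 ler_wpDl ?sqnorm_ge0 //; apply: weighted_sqnorm_ge => q yq.
by apply: sqr_anti; rewrite leqNgt; apply: contra yq => kq; rewrite yT // inE.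
Qed.

Lemma transfer_singular_value_le (i : 'I_chi) : nth 0 (singular_values M) i.+2 <= s i.
Proof.
pose T := [set q : 'I_chi | (q < i)%N]; have ltichi := ltn_ord i.
(* the first block column of this constraint is the first column of M^* *)
apply: (singular_value_le (p := 1 + #|T| + 1)
  (G := block_mx (block_mx (NR%:C%C)%:M 0 (pR ^t*) (coord_mx T)) 0 0 1%:M) (s_ge0 i)).
  by rewrite card_ord_ltn; lia.
move=> x; rewrite -[x]hsubmxK -[lsubmx x]hsubmxK mul_row3_block3 => /eqP.
rewrite !row_mx_eq0 => /andP[/andP[/eqP x0 /eqP/coord_mx_eq0 yT] /eqP->].
rewrite mul_adj_transfer_mx x0 !sqnorm_row_mx sqnorm_mul_diag !sqnorm0 add0r !addr0.
apply: le_trans (weighted_sqnorm_le (c := (s i ^+ 2)%:C%C) _) _ => [q yq|].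
  by apply: sqr_anti; rewrite leqNgt; apply: contra yq => qi; rewrite yT // inE.
by rewrite ler_wpM2l ?ler0c ?exprn_ge0 // lerDr sqnorm_ge0.
Qed.

End Transfer.

(* In the statement s i is s_(i+1) and the entry i.+2 of [singular_values] is
   lambda_(i+1): with a = i + 1 the claim reads s_(a+2) <= lambda_a <= s_a. *)
Theorem mainTheorem5 (R : rcfType) (chi : nat) (NR NL : R) (s : 'I_chi -> R)
    (pR : 'rV[R[i]]_chi) (pL : 'cV[R[i]]_chi) :
  (3 <= chi)%N ->
  (forall i j : 'I_chi, (i <= j)%N -> s j <= s i) ->
  (forall i : 'I_chi, 0 <= s i) ->
  forall i k : 'I_chi, nat_of_ord k = (nat_of_ord i).+2 ->
    s k <= nth 0 (singular_values (transfer_mx NR NL s pR pL)) (i.+2) /\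
    nth 0 (singular_values (transfer_mx NR NL s pR pL)) (i.+2) <= s i.
Proof.
move=> _ s_anti s_ge0 i k ki; split.
  by rewrite -ki; apply: transfer_singular_value_ge.
exact: transfer_singular_value_le.
Qed.
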